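(* For any theory $\Gamma$ and any consistent set $T$ of explicit literals: $\langle T,T\rangle$ is an equilibrium model of $\Gamma$ if and only if $T$ is a $\subseteq$-minimal model of $\Gamma^T_+=\{\varphi^T_+\mid\varphi\in\Gamma\}$, i.e., $T$ classically satisfies every formula of $\Gamma^T_+$ and no consistent set $H\subsetneq T$ does.
   Context: Fix a set $\mathit{At}$ of atoms. An explicit literal is $p$ or $\sim p$; a set of explicit literals is consistent if it never contains both $p$ and $\sim p$. Formulas: $\varphi ::= p\mid\bot\mid\varphi\wedge\varphi\mid\varphi\vee\varphi\mid\varphi\to\varphi\mid\sim\varphi$ with $\neg\varphi:=\varphi\to\bot$, $\top:=\neg\bot$; a theory is a set of formulas. Classical satisfaction/falsification by a consistent set $T$: $T\not\models\bot$, $T=\!\!|\;\bot$; $T\models p$ iff $p\in T$, $T=\!\!|\;p$ iff $\sim p\in T$; $\wedge$: satisfied iff both, falsified iff at least one falsified; $\vee$: satisfied iff at least one, falsified iff both falsified; $T\models\sim\varphi$ iff $T=\!\!|\;\varphi$, $T=\!\!|\;\sim\varphi$ iff $T\models\varphi$; $T\models\varphi\to\psi$ iff $T\not\models\varphi$ or $T\models\psi$, $T=\!\!|\;\varphi\to\psi$ iff $T\models\varphi$ and $T=\!\!|\;\psi$. ${\cal X}_5$-interpretations: pairs $\langle H,T\rangle$ of consistent sets of explicit literals with $H\subseteq T$, with $\langle H,T\rangle\not\models\bot$, $=\!\!|\;\bot$; $\models p$ iff $p\in H$, $=\!\!|\;p$ iff $\sim p\in H$; $\wedge,\vee,\sim$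 as in the classical clauses with $\langle H,T\rangle$ in place of $T$; $\langle H,T\rangle\models\varphi\to\psi$ iff (i) $\langle H,T\rangle\not\models\varphi$ or $\langle H,T\rangle\models\psi$ and (ii) $\langle T,T\rangle\not\models\varphi$ or $\langle T,T\rangle\models\psi$; $\langle H,T\rangle=\!\!|\;\varphi\to\psi$ iff $\langle T,T\rangle\models\varphi$ and $\langle H,T\rangle=\!\!|\;\psi$. $\langle T,T\rangle$ is an equilibrium model of $\Gamma$ if it satisfies every formula of $\Gamma$ and no $\langle H,T\rangle$ with $H\subsetneq T$ does. Transformations $\varphi^T_+$, $\varphi^T_-$ (clauses for $\neg\alpha$ take priority over those for $\to$): $\varphi^T_+=\bot$ if $T\not\models\varphi$; otherwise $p^T_+=p$; $(\alpha\otimes\beta)^T_+=\alpha^T_+\otimes\beta^T_+$ for $\otimes\in\{\wedge,\vee\}$; $(\alpha\to\beta)^T_+=\neg(\alpha^T_+)\vee\beta^T_+$; $(\neg\alpha)^T_+=\neg(\alpha^T_+)$; $(\sim\alpha)^T_+=\sim(\alpha^T_-)$. $\varphi^T_-=\top$ if $T$ does not falsify $\varphi$; otherwise $p^T_-=p$; $\bot^T_-=\bot$; $(\alpha\otimes\beta)^T_-=\alpha^T_-\otimes\beta^T_-$; $(\alpha\to\beta)^T_-=\beta^T_-$; $(\neg\alpha)^T_-=\bot$; $(\sim\alpha)^T_-=\sim(\alpha^T_+)$. *)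

From Stdlib Require Import Bool.

Section Syntax.
Variable At : Type.

Inductive lit : Type := Pos (p : At) | Neg (p : At).

Inductive form : Type :=
| Atom (p : At)
| Bot
| And (a b : form)
| Or (a b : form)
| Imp (a b : form)
| SNeg (a : form).

Definition Not (a : form) : form := Imp a Bot.
Definition Top : form := Not Bot.

Definition litset := lit -> bool.
Definition theory := form -> Prop.

Definition consistent (T : litset) : Prop :=
  forall p : At, ~ (T (Pos p) = true /\ T (Neg p) = true).

Definition subset (H T : litset) : Prop := forall l, H l = true -> T l = true.
Definition ssubset (H T : litset) : Prop :=
  subset H T /\ exists l, T l = true /\ H l = false.

Fixpoint csat (T : litset) (f : form) : bool :=
  match f with
  | Atom p => T (Pos p)
  | Bot => false
  | And a b => csat T a && csat T b
  | Or a b => csat T a || csat T b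
  | Imp a b => negb (csat T a) || csat T b
  | SNeg a => cfal T a
  end
with cfal (T : litset) (f : form) : bool :=
  match f with
  | Atom p => T (Neg p)
  | Bot => true
  | And a b => cfal T a || cfal T b
  | Or a b => cfal T a && cfal T b
  | Imp a b => csat T a && cfal T b
  | SNeg a => csat T a
  end.

(* X5 satisfaction / falsification by <H,T> *)
Fixpoint xsat (H T : litset) (f : form) : bool :=
  match f with
  | Atom p => H (Pos p)
  | Bot => false
  | And a b => xsat H T a && xsat H T b
  | Or a b => xsat H T a || xsat H T b
  | Imp a b => (negb (xsat H T a) || xsat H T b)
               && (negb (xsat T T a) || xsat T T b)
  | SNeg a => xfal H T a
  end
with xfal (H T : litset) (f : form) : bool :=
  match f with
  | Atom p => H (Neg p)
  | Bot => true
  | And a b => xfal H T a || xfal H T b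
  | Or a b => xfal H T a && xfal H T b
  | Imp a b => xsat T T a && xfal H T b
  | SNeg a => xsat H T a
  end.

Definition xmodel (G : theory) (H T : litset) : Prop :=
  forall f, G f -> xsat H T f = true.

Definition equilibrium (G : theory) (T : litset) : Prop :=
  consistent T /\ xmodel G T T /\
  forall H : litset, consistent H -> ssubset H T -> ~ xmodel G H T.

(* transformations phi^T_+ and phi^T_- ; clauses for (Not a) = Imp a Bot
   take priority over the ones for Imp *)
Fixpoint tplus (T : litset) (f : form) : form :=
  if negb (csat T f) then Bot else
  match f with
  | Atom p => Atom p
  | Bot => Bot
  | And a b => And (tplus T a) (tplus T b)
  | Or a b => Or (tplus T a) (tplus T b)
  | Imp a Bot => Not (tplus T a)
  | Imp a b => Or (Not (tplus T a)) (tplus T b)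
  | SNeg a => SNeg (tminus T a)
  end
with tminus (T : litset) (f : form) : form :=
  if negb (cfal T f) then Top else
  match f with
  | Atom p => Atom p
  | Bot => Bot
  | And a b => And (tminus T a) (tminus T b)
  | Or a b => Or (tminus T a) (tminus T b)
  | Imp a Bot => Bot
  | Imp a b => tminus T b
  | SNeg a => SNeg (tplus T a)
  end.

Definition theory_plus (G : theory) (T : litset) : theory :=
  fun g => exists f, G f /\ g = tplus T f.

Definition cmodel (G : theory) (T : litset) : Prop :=
  forall g, G g -> csat T g = true.

Definition minimal_model (G : theory) (T : litset) : Prop :=
  cmodel G T /\ forall H : litset, consistent H -> ssubset H T -> ~ cmodel G H.

End Syntax.

Arguments Pos {At}. Arguments Neg {At}.
Arguments Atom {At}. Arguments Bot {At}. Arguments And {At}. Arguments Or {At}.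
Arguments Imp {At}. Arguments SNeg {At}.

From Stdlib Require Import Bool Setoid.

(* For [H] included in [T], X5-satisfaction is persistent: whatever <H,T> satisfies
   (falsifies), <T,T> satisfies (falsifies), and <T,T> is just the classical
   interpretation [T]. So subformulas that [T] does not satisfy (falsify) may be
   replaced by [Bot] ([Top]), and the "there" conjunct of an implication is already
   decided by [T]; a simultaneous induction then shows that <H,T> satisfies [f] iff
   [H] classically satisfies [tplus T f] (and dually for falsification and [tminus]).
   Hence the X5-models <H,T> of [G] are exactly the classical models [H] of
   [theory_plus G T], and the two minimality conditions coincide. *)

Lemma subset_refl (At : Type) (T : litset At) : subset At T T.
Proof. intros l Tl; exact Tl. Qed.

Section Transformation.
Variables (At : Type) (T : litset At).

Lemma xsat_total_xfal_total (f : form At) :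
  xsat At T T f = csat At T f /\ xfal At T T f = cfal At T f.
Proof.
  induction f as [p | | a [Sa Fa] b [Sb Fb] | a [Sa Fa] b [Sb Fb] | a [Sa Fa] b [Sb Fb] | a [Sa Fa]];
    simpl; rewrite ?Sa, ?Fa, ?Sb, ?Fb, ?andb_diag; auto.
Qed.

Lemma xsat_total (f : form At) : xsat At T T f = csat At T f.
Proof. exact (proj1 (xsat_total_xfal_total f)). Qed.

Lemma xfal_total (f : form At) : xfal At T T f = cfal At T f.
Proof. exact (proj2 (xsat_total_xfal_total f)). Qed.

Lemma tplus_Bot_of_csat_false (f : form At) : csat At T f = false -> tplus At T f = Bot.
Proof. intro E; destruct f; cbn [tplus]; rewrite E; reflexivity. Qed.

Lemma tminus_Top_of_cfal_false (f : form At) : cfal At T f = false -> tminus At T f = Top At.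
Proof. intro E; destruct f; cbn [tminus]; rewrite E; reflexivity. Qed.

(* The priority of the clauses for [Not a] is harmless: [tplus T Bot] and
   [tminus T Bot] are both [Bot]. *)
Lemma csat_tplus_Imp (H : litset At) (a b : form At) : csat At T (Imp a b) = true ->
  csat At H (tplus At T (Imp a b)) = negb (csat At H (tplus At T a)) || csat At H (tplus At T b).
Proof.
  intro E; destruct b; cbn [tplus]; rewrite E; simpl; rewrite ?orb_false_r; auto.
Qed.

Lemma tminus_Imp (a b : form At) : cfal At T (Imp a b) = true -> tminus At T (Imp a b) = tminus At T b.
Proof. intro E; destruct b; cbn [tminus]; rewrite E; reflexivity. Qed.

Section HereThere.
Variable H : litset At.
Hypothesis HT : subset At H T.

Lemma xsat_xfal_persistent (f : form At) :
  (xsat At H T f = true -> xsat At T T f = true) /\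
  (xfal At H T f = true -> xfal At T T f = true).
Proof.
  induction f as [p | | a [Sa Fa] b [Sb Fb] | a [Sa Fa] b [Sb Fb] | a [Sa Fa] b [Sb Fb] | a [Sa Fa]];
    simpl; split; intro X; rewrite ?andb_diag;
    repeat first [ rewrite andb_true_iff in X | rewrite orb_true_iff in X
                 | rewrite andb_true_iff | rewrite orb_true_iff ]; intuition.
Qed.

Lemma xsat_false_of_csat_false (f : form At) : csat At T f = false -> xsat At H T f = false.
Proof.
  rewrite <- xsat_total, <- !not_true_iff_false.
  intros E X; exact (E (proj1 (xsat_xfal_persistent f) X)).
Qed.

Lemma xfal_false_of_cfal_false (f : form At) : cfal At T f = false -> xfal At H T f = false.
Proof.
  rewrite <- xfal_total, <- !not_true_iff_false.
  intros E X; exact (E (proj2 (xsat_xfal_persistent f) X)).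
Qed.

Lemma xsat_tplus_of_csat (f : form At) :
  (csat At T f = true -> xsat At H T f = csat At H (tplus At T f)) ->
  xsat At H T f = csat At H (tplus At T f).
Proof.
  destruct (csat At T f) eqn:E; auto.
  rewrite tplus_Bot_of_csat_false, xsat_false_of_csat_false; auto.
Qed.

Lemma xfal_tminus_of_cfal (f : form At) :
  (cfal At T f = true -> xfal At H T f = cfal At H (tminus At T f)) ->
  xfal At H T f = cfal At H (tminus At T f).
Proof.
  destruct (cfal At T f) eqn:E; auto.
  rewrite tminus_Top_of_cfal_false, xfal_false_of_cfal_false; auto.
Qed.

Lemma xsat_tplus_xfal_tminus (f : form At) :
  xsat At H T f = csat At H (tplus At T f) /\ xfal At H T f = cfal At H (tminus At T f).
Proof.
  induction f as [p | | a [Sa Fa] b [Sb Fb] | a [Sa Fa] b [Sb Fb] | a [Sa Fa] b [Sb Fb] | a [Sa Fa]];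
    (split; [apply xsat_tplus_of_csat | apply xfal_tminus_of_cfal]); intro E.
  all: try (cbn [tplus tminus]; rewrite E; simpl; rewrite ?Sa, ?Fa, ?Sb, ?Fb; reflexivity).
  - rewrite csat_tplus_Imp by exact E.
    simpl in E |- *; rewrite !xsat_total, E, Sa, Sb, andb_true_r; reflexivity.
  - rewrite tminus_Imp by exact E.
    simpl in E |- *; apply andb_true_iff in E as [Ea _].
    rewrite xsat_total, Ea, Fb; reflexivity.
Qed.

Lemma xmodel_iff_cmodel_theory_plus (G : theory At) :
  xmodel At G H T <-> cmodel At (theory_plus At G T) H.
Proof.
  split.
  - intros M g [f [Gf ->]].
    rewrite <- (proj1 (xsat_tplus_xfal_tminus f)); exact (M f Gf).
  - intros M f Gf.
    rewrite (proj1 (xsat_tplus_xfal_tminus f)); exact (M _ (ex_intro _ f (conj Gf eq_refl))).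
Qed.
End HereThere.
End Transformation.

Theorem corollary3 (At : Type) (G : theory At) (T : litset At) :
  consistent At T ->
  (equilibrium At G T <-> minimal_model At (theory_plus At G T) T).
Proof.
  intros CT.
  pose proof (xmodel_iff_cmodel_theory_plus At T T (subset_refl At T) G) as TT.
  unfold equilibrium, minimal_model; rewrite TT.
  split.
  - intros [_ [M Min]]; split; [exact M |].
    intros H CH HT; rewrite <- xmodel_iff_cmodel_theory_plus by exact (proj1 HT).
    exact (Min H CH HT).
  - intros [M Min]; split; [exact CT | split; [exact M |]].
    intros H CH HT; rewrite xmodel_iff_cmodel_theory_plus by exact (proj1 HT).
    exact (Min H CH HT).
Qed.
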